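(* Let $N>0$, $P_1\in(0,1)$, $\sigma\ge 0$, $\nu>0$ and $\xi>0$ be real numbers, and let $\alpha(a_1,a_2)\ge 0$ and $\beta(a_1,a_2)\ge 0$ be given for $(a_1,a_2)\in\{0,1\}^2$, with $\alpha(1,0)=\alpha(0,1)=:\alpha$ and $\beta(1,0)=\beta(0,1)=:\beta$. For $S_1\in[0,N]$ and $(a_1,a_2)\in\{0,1\}^2$ put $$\mu_{a_1,a_2}(S_1)=\sigma S_1+\sigma(N-S_1)+a_1\nu S_1+a_2\nu (N-S_1),\qquad \Lambda_{a_1,a_2}(S_1)=\sum_{\eta=0}^{\lceil\xi\rceil-1} e^{-\mu_{a_1,a_2}(S_1)}\frac{\mu_{a_1,a_2}(S_1)^{\eta}}{\eta!},$$ and $$Q^\sharp(S_1)=P_1\sum_{(a_1,a_2)\in\{0,1\}^2}\beta(a_1,a_2)\,\Lambda_{a_1,a_2}(S_1)+(1-P_1)\sum_{(a_1,a_2)\in\{0,1\}^2}\alpha(a_1,a_2)\,\big(1-\Lambda_{a_1,a_2}(S_1)\big).$$ Define $$\Upsilon(\xi)=\big(\alpha(P_1-1)+\beta P_1\big)\big(2+N(\nu+2\sigma)-2\lceil\xi\rceil\big).$$ If $\Upsilon(\xi)>0$, then $Q^\sharp$, as a function of $S_1$, achieves a local minimum at $S_1=N/2$; otherwise it achieves a local maximum at $S_1=N/2$.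
   Context: Setting: a cooperative molecular communication system with a transmitter (TX), $K=2$ receivers $\mathrm{RX}_1,\mathrm{RX}_2$ in a symmetric topology, and a fusion center (FC). The TX sends bit 1 with probability $P_1$. Each $\mathrm{RX}_k$ makes a binary decision and reports a decision 1 by releasing $S_k$ molecules of a common type, with $S_1+S_2=N$ ($S_2=N-S_1$); the FC compares its molecule count with a constant threshold $\xi$, so its error probability is $Q^\sharp$ above, where $\Lambda_{a_1,a_2}$ is the Poisson probability that the FC count is below $\lceil\xi\rceil$ when the current RX decisions are $(a_1,a_2)$. Here $\sigma$ (the same for both receivers by symmetry) is $\sum_{i=1}^{j-1}\hat W_{\mathrm{RX}_k}[i]\sum_{\tilde m=1}^{M_{\mathrm{FC}}}P_k((j-i)T+\tilde m\Delta t_{\mathrm{FC}})$, the per-molecule expected intersymbol interference at the FC from previous RX decisions $\hat W_{\mathrm{RX}_k}[i]\in\{0,1\}$; $\nu=\sum_{\tilde m=1}^{M_{\mathrm{FC}}}P_k(\tilde m\Delta t_{\mathrm{FC}})$ is the per-molecule expected count at the FC from a current RX emission, where $P_k(t)$ is the probability that a molecule released by $\mathrm{RX}_k$ is inside the FC at time $t$, $T$ the symbol interval, and $M_{\mathrm{FC}},\Delta t_{\mathrm{FC}}$ the number of FC samples and the sampling step. $\alpha(a_1,a_2)$ (resp. $\beta(a_1,a_2)$) is the probability that $\mathrm{RX}_1,\mathrm{RX}_2$ decide $(a_1,a_2)$ given the TX sent $0$ (resp. $1$) in the current interval and the given previous TX symbols; symmetry gives the stated equalities. *)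

From HB Require Import structures.
From mathcomp Require Import all_boot all_order all_algebra.
From mathcomp Require Import all_classical all_reals all_analysis.
Set Implicit Arguments. Unset Strict Implicit. Unset Printing Implicit Defensive.
Import Order.TTheory GRing.Theory Num.Theory.
Local Open Scope ring_scope.

(* ceil(xi) as a natural number (xi > 0 in the statement, so ceil xi >= 1) *)
Definition ceilN {R : realType} (xi : R) : nat := `|Num.ceil xi|%N.

Definition mu {R : realType} (N sigma nu S1 : R) (a1 a2 : bool) : R :=
  sigma * S1 + sigma * (N - S1) + (a1%:R) * nu * S1 + (a2%:R) * nu * (N - S1).

Definition Lambda {R : realType} (xi m : R) : R :=
  \sum_(eta < ceilN xi) expR (- m) * m ^+ eta / (eta`!)%:R.

Definition Qsharp {R : realType} (N P1 sigma nu xi : R)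
  (alpha beta : bool -> bool -> R) (S1 : R) : R :=
  P1 * (\sum_(a : bool * bool) beta a.1 a.2 * Lambda xi (mu N sigma nu S1 a.1 a.2))
  + (1 - P1) * (\sum_(a : bool * bool)
                  alpha a.1 a.2 * (1 - Lambda xi (mu N sigma nu S1 a.1 a.2))).

Definition Upsilon {R : realType} (N P1 sigma nu xi alpha beta : R) : R :=
  (alpha * (P1 - 1) + beta * P1) * (2 + N * (nu + 2 * sigma) - 2 * (ceilN xi)%:R).

Definition local_min_on {R : realType} (lo hi : R) (f : R -> R) (x0 : R) : Prop :=
  exists2 d : R, 0 < d &
    forall s, lo <= s <= hi -> `|s - x0| < d -> f x0 <= f s.
Definition local_max_on {R : realType} (lo hi : R) (f : R -> R) (x0 : R) : Prop :=
  exists2 d : R, 0 < d &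
    forall s, lo <= s <= hi -> `|s - x0| < d -> f s <= f x0.

From Pilot Require Import Defs.
From HB Require Import structures.
From mathcomp Require Import all_boot all_order all_algebra.
From mathcomp Require Import all_classical all_reals all_analysis.
From mathcomp Require Import ring lra.
Import Order.TTheory GRing.Theory Num.Theory numFieldNormedType.Exports.
Local Open Scope ring_scope.

(* Only the mixed decisions (1,0) and (0,1) depend on S1, through the rates
   m0 + u and m0 - u with m0 = sigma N + nu N / 2 and u = nu (S1 - N/2).  Hence
   Q(S1) - Q(N/2) = c (L(m0 + u) + L(m0 - u) - 2 L(m0)) with
   c = P1 beta - (1 - P1) alpha, where L is the Poisson cdf at k = ceil(xi) - 1,
   and Upsilon = 2 c (m0 - k).  Since L' is minus the Poisson pmf at k, which
   increases on [0, k] and decreases on [k, +oo), the map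
   |u| |-> L(m0 + u) + L(m0 - u) is nondecreasing near 0 when m0 > k and
   nonincreasing when m0 < k: the second difference has the sign of m0 - k, so
   Q(S1) - Q(N/2) has the sign of Upsilon. *)

Section poisson_cdf.
Context {R : realType}.
Implicit Types (k : nat) (m u x y : R).

(* The summand of [Lambda]; unlike the library's [poisson_pmf] it has no junk
   value at nonpositive rates, so it is differentiable everywhere. *)
Definition poisson_term (k : nat) (m : R) : R := expR (- m) * m ^+ k / k`!%:R.

Definition poisson_cdf (K : nat) (m : R) : R := \sum_(k < K) poisson_term k m.

Lemma poisson_term_ge0 k m : 0 <= m -> 0 <= poisson_term k m.
Proof. by move=> m0; rewrite divr_ge0 ?mulr_ge0 ?expR_ge0 ?exprn_ge0. Qed.

Lemma poisson_termS k m :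
  poisson_term k.+1 m = poisson_term k m * (m / k.+1%:R).
Proof.
rewrite /poisson_term exprSr factS natrM; field.
by rewrite nat1r !pnatr_eq0 -!lt0n fact_gt0.
Qed.

Lemma is_derive_poisson_term0 x :
  is_derive x 1 (poisson_term 0) (- poisson_term 0 x).
Proof.
have E m : poisson_term 0 m = expR (- m) by rewrite /poisson_term mulr1 divr1.
by rewrite (funext E); apply: is_derive_eq; rewrite mulrN1.
Qed.

Lemma is_derive_poisson_termS k x :
  is_derive x 1 (poisson_term k.+1) (poisson_term k x - poisson_term k.+1 x).
Proof.
pose c : R := (k.+1`!%:R)^-1.
have E : poisson_term k.+1 = c \*: ((fun m => expR (- m)) * (fun m => m ^+ k.+1)).
  by apply/funext => m; rewrite /poisson_term /= mulrC.
have dX : is_derive x 1 (fun m : R => m ^+ k.+1) (k.+1%:R * x ^+ k).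
  by have := is_deriveX k.+1 (@is_derive_id _ _ x 1); rewrite exprfctE scaler1.
rewrite {1}E; apply: is_derive_eq.
have scaleE (a b : R) : a *: b = a * b by [].
rewrite /= !scaleE /c /poisson_term factS natrM; field.
by rewrite nat1r !pnatr_eq0 -!lt0n fact_gt0.
Qed.

Lemma is_derive_poisson_cdf k x :
  is_derive x 1 (poisson_cdf k.+1) (- poisson_term k x).
Proof.
elim: k x => [|k IHk] x.
  have -> : poisson_cdf 1 = poisson_term 0 by apply/funext => m; rewrite /poisson_cdf big_ord1.
  exact: is_derive_poisson_term0.
have -> : poisson_cdf k.+2 = poisson_cdf k.+1 + poisson_term k.+1.
  by apply/funext => m; rewrite /poisson_cdf big_ord_recr.
apply: is_derive_eq; first exact: is_deriveD (IHk x) (is_derive_poisson_termS k x).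
by rewrite /=; lra.
Qed.

Lemma le_of_is_derive_ge0 (f f' : R -> R) (a b : R) :
  (forall x, is_derive x 1 f (f' x)) -> (forall x, a < x < b -> 0 <= f' x) ->
  a <= b -> f a <= f b.
Proof.
move=> df df'ge0 ab.
apply: (@ger0_derive1_le_cc _ f a b); rewrite ?bound_itvE //.
- by move=> x; rewrite in_itv /= derive1E derive_val => /df'ge0.
- apply: continuous_subspaceT => x.
  by apply/differentiable_continuous/derivable1_diffP; case: (df x).
Qed.

Lemma ge_of_is_derive_le0 (f f' : R -> R) (a b : R) :
  (forall x, is_derive x 1 f (f' x)) -> (forall x, a < x < b -> f' x <= 0) ->
  a <= b -> f b <= f a.
Proof.
move=> df df'le0 ab; rewrite -lerN2.
apply: (@le_of_is_derive_ge0 (fun x => - f x) (fun x => - f' x)) => // x /df'le0.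
by rewrite oppr_ge0.
Qed.

Lemma poisson_term_nondecr k x y :
  0 <= x -> x <= y -> y <= k%:R -> poisson_term k x <= poisson_term k y.
Proof.
case: k => [|k] x0 xy yk; first by rewrite (_ : y = x) //; lra.
apply: le_of_is_derive_ge0 xy => [z|z /andP[xz zy]].
  exact: is_derive_poisson_termS.
rewrite /= poisson_termS -{1}[poisson_term k z]mulr1 -mulrBr.
rewrite mulr_ge0 ?poisson_term_ge0 1?subr_ge0 ?ler_pdivrMr ?mul1r; lra.
Qed.

Lemma poisson_term_nonincr k x y :
  k%:R <= x -> x <= y -> poisson_term k y <= poisson_term k x.
Proof.
move=> kx xy; have x0 : 0 <= x by apply: le_trans kx; rewrite ler0n.
case: k kx => [|k] kx.
  apply: ge_of_is_derive_le0 xy => [z|z /andP[xz _]].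
    exact: is_derive_poisson_term0.
  by rewrite /= oppr_le0 poisson_term_ge0 //; lra.
apply: ge_of_is_derive_le0 xy => [z|z /andP[xz zy]].
  exact: is_derive_poisson_termS.
rewrite /= poisson_termS -{1}[poisson_term k z]mulr1 -mulrBr.
by rewrite mulr_ge0_le0 ?poisson_term_ge0 1?subr_le0 ?ler_pdivlMr ?mul1r ?ltr0Sn //; lra.
Qed.

Definition second_diff (f : R -> R) (x u : R) : R :=
  f (x + u) + f (x - u) - 2 * f x.

Lemma second_diff_normr f x u : second_diff f x `|u| = second_diff f x u.
Proof.
by case: (ger0P u) => // _; rewrite /second_diff opprK (addrC (f (x - u))).
Qed.

Lemma is_derive_poisson_cdf_sym k m0 u :
  is_derive u 1 (fun v => poisson_cdf k.+1 (m0 + v) + poisson_cdf k.+1 (m0 - v))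
    (poisson_term k (m0 - u) - poisson_term k (m0 + u)).
Proof.
have dplus : is_derive u 1 (poisson_cdf k.+1 \o +%R m0) (- poisson_term k (m0 + u) * 1).
  apply: is_derive1_comp; first exact: is_derive_poisson_cdf.
  by rewrite -[1 in X in is_derive _ _ _ X]add0r; exact: is_deriveD.
have dminus : is_derive u 1 (poisson_cdf k.+1 \o (fun v => m0 - v))
    (- poisson_term k (m0 - u) * -1).
  apply: is_derive1_comp; first exact: is_derive_poisson_cdf.
  by rewrite -[-1 in X in is_derive _ _ _ X]add0r; exact: is_deriveB.
by apply: is_derive_eq; lra.
Qed.

Lemma poisson_term_sym_sign k m0 u :
  0 <= u -> u <= Num.min m0 `|m0 - k%:R| ->
  0 <= (m0 - k%:R) * (poisson_term k (m0 - u) - poisson_term k (m0 + u)).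
Proof.
rewrite le_min => u0 /andP[um0]; case: (ltrP m0 k%:R) => [m0k|km0].
  rewrite nmulr_rge0 ?subr_lt0 // subr_le0 => ukm0.
  apply: poisson_term_nondecr; lra.
move=> um0k; rewrite mulr_ge0 ?subr_ge0 //; apply: poisson_term_nonincr; lra.
Qed.

Lemma second_diff_poisson_cdf_sign {k : nat} {m0 : R} :
  0 < m0 -> m0 != k%:R -> exists2 d : R, 0 < d &
    forall u, `|u| < d -> 0 <= (m0 - k%:R) * second_diff (poisson_cdf k.+1) m0 u.
Proof.
move=> m0pos m0k; exists (Num.min m0 `|m0 - k%:R|).
  by rewrite lt_min m0pos normr_gt0 subr_eq0.
move=> u /ltW hu; rewrite -second_diff_normr.
pose F v := poisson_cdf k.+1 (m0 + v) + poisson_cdf k.+1 (m0 - v).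
have : (m0 - k%:R) * F 0 <= (m0 - k%:R) * F `|u|.
  apply: (@le_of_is_derive_ge0 (fun v => (m0 - k%:R) * F v)
    (fun v => (m0 - k%:R) * (poisson_term k (m0 - v) - poisson_term k (m0 + v))))
    => // [v|v /andP[v0 vu]].
    exact: is_deriveZ (is_derive_poisson_cdf_sym k m0 v).
  by apply: poisson_term_sym_sign; lra.
by rewrite /F /second_diff addr0 subr0 mulrBr; lra.
Qed.

End poisson_cdf.

Lemma local_extremum_of_sign {R : realType} (lo hi x0 k : R) (f : R -> R) :
  (k != 0 -> exists2 d : R, 0 < d &
     forall s, `|s - x0| < d -> 0 <= k * (f s - f x0)) ->
  (0 < k -> local_min_on lo hi f x0) /\ (k < 0 -> local_max_on lo hi f x0).
Proof.
move=> H; split => k0.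
  have [d d0 hd] := H (lt0r_neq0 k0).
  by exists d => // s _ /hd; rewrite pmulr_rge0 // subr_ge0.
have [d d0 hd] := H (ltr0_neq0 k0).
by exists d => // s _ /hd; rewrite nmulr_rge0 // subr_le0.
Qed.

Lemma sum_pair_bool {R : realType} (g : bool * bool -> R) :
  \sum_(a : bool * bool) g a =
    g (true, true) + g (true, false) + g (false, true) + g (false, false).
Proof.
rewrite (eq_bigr (fun a => g (a.1, a.2))) => [|[] //].
by rewrite -(pair_bigA _ (fun a b => g (a, b))) /= !big_bool /= addrA.
Qed.

Lemma Qsharp_sym {R : realType} (N P1 sigma nu xi : R) (alpha beta : bool -> bool -> R) s :
  alpha true false = alpha false true -> beta true false = beta false true ->
  Qsharp N P1 sigma nu xi alpha beta s =
    Qsharp N P1 sigma nu xi alpha beta (N / 2) +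
    (P1 * beta true false - (1 - P1) * alpha true false) *
      second_diff (Lambda xi) (sigma * N + nu * N / 2) (nu * (s - N / 2)).
Proof.
move=> hae hbe; pose m0 := sigma * N + nu * N / 2.
have mu_tf S : mu N sigma nu S true false = m0 + nu * (S - N / 2).
  by rewrite /mu /m0 /=; field.
have mu_ft S : mu N sigma nu S false true = m0 - nu * (S - N / 2).
  by rewrite /mu /m0 /=; field.
have mu_tt S : mu N sigma nu S true true = sigma * N + nu * N.
  by rewrite /mu /=; ring.
have mu_ff S : mu N sigma nu S false false = sigma * N.
  by rewrite /mu /=; ring.
rewrite /Qsharp /second_diff !sum_pair_bool /= !mu_tf !mu_ft !mu_tt !mu_ff.
rewrite subrr mulr0 addr0 subr0 -/m0 -hae -hbe; ring.
Qed.

Theorem lemma3 (R : realType) (N P1 sigma nu xi : R)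
  (alpha beta : bool -> bool -> R) :
  0 < N -> 0 < P1 < 1 -> 0 <= sigma -> 0 < nu -> 0 < xi ->
  (forall a1 a2, 0 <= alpha a1 a2) -> (forall a1 a2, 0 <= beta a1 a2) ->
  alpha true false = alpha false true ->
  beta true false = beta false true ->
  let Ups := Upsilon N P1 sigma nu xi (alpha true false) (beta true false) in
  (0 < Ups -> local_min_on 0 N (Qsharp N P1 sigma nu xi alpha beta) (N / 2)) /\
  (Ups < 0 -> local_max_on 0 N (Qsharp N P1 sigma nu xi alpha beta) (N / 2)).
Proof.
move=> N0 _ sigma0 nu0 xi0 _ _ hae hbe Ups.
have [k Kk] : exists k, Defs.ceilN xi = k.+1.
  by exists (Defs.ceilN xi).-1; rewrite prednK // absz_gt0 gt_eqF // ceil_gt0.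
set m0 := sigma * N + nu * N / 2.
set c := P1 * beta true false - (1 - P1) * alpha true false.
have UpsE : Ups = 2 * c * (m0 - k%:R) by rewrite /Ups /Upsilon Kk -natr1 /c /m0; field.
apply: local_extremum_of_sign; rewrite UpsE => Ups0.
have m0_gt0 : 0 < m0 by rewrite /m0; nra.
have m0_neq : m0 != k%:R.
  by move: Ups0; rewrite mulf_eq0 negb_or subr_eq0 => /andP[].
have [d d0 hd] := second_diff_poisson_cdf_sign m0_gt0 m0_neq.
exists (d / nu) => [|s hs]; first by rewrite divr_gt0.
rewrite [X in _ * (X - _)]Qsharp_sym // -/m0 -/c (addrC (Qsharp _ _ _ _ _ _ _ _)) addrK.
rewrite (_ : Lambda xi = poisson_cdf k.+1); last by rewrite /Lambda Kk.
have hu : `|nu * (s - N / 2)| < d by rewrite normrM gtr0_norm // mulrC -ltr_pdivlMr.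
have := hd _ hu; set D := second_diff _ _ _ => hD.
(* the goal is 0 <= 2 c^2 ((m0 - k) D) *)
by have := sqr_ge0 c; nra.
Qed.
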